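(* Let $Q$ be a quiver without oriented cycles, $\mathbf D=k\tilde Q/\mathcal I$, $i$ a sink of $Q$, and $M$ a $\Delta$-filtered $\mathbf D$-module with $d_i=(\underline{\dim}_\Delta M)_i>0$. Then $M$ has a unique quotient module isomorphic to $\Delta(i)^{d_i}$ (i.e. a unique submodule $Y$ with $M/Y\cong\Delta(i)^{d_i}$), and this submodule $Y$ is $\Delta$-filtered.
   Context: $k$ is an algebraically closed field. $\tilde Q$ is the double of $Q$ (arrows $\alpha\in Q_1$ and $\alpha^*:t(\alpha)\to s(\alpha)$), paths composed right to left; $\mathcal I\subseteq k\tilde Q$ is generated by $\alpha^*\alpha-\sum_{\gamma\in Q_1,t(\gamma)=s(\alpha)}\gamma\gamma^*$ ($\alpha\in Q_1$) and $\beta^*\alpha$ ($\alpha\ne\beta\in Q_1$, $t(\alpha)=t(\beta)$). $\Delta(i)$ is the indecomposable projective $kQ$-module with top $L(i)$, a $\mathbf D$-module via $\mathbf D\to kQ$ (killing the $\alpha^*$). $\Delta$-filtered: has a filtration by submodules with successive quotients among the $\Delta(j)$ (equivalently, projective as a $kQ$-module). $\underline{\dim}_\Delta(M)_i$ is the multiplicity of $\Delta(i)$ in such a filtration. A sink is a vertex at which no arrow of $Q$ starts. *)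

From HB Require Import structures.
From mathcomp Require Import all_boot all_order all_algebra.
Set Implicit Arguments. Unset Strict Implicit. Unset Printing Implicit Defensive.
Import GRing.Theory.
Local Open Scope ring_scope.

(* A path is encoded as the list of its arrows in the order of traversal
   [:: a1; ...; am] (as an element of kQ it is am ... a1, composing right to left). *)
Section Quiver.
Variables (V Ar : finType) (s t : Ar -> V).

Definition is_path (j : V) (p : seq Ar) : bool :=
  if p is a :: p' then (s a == j) && path (fun a b => t a == s b) a p' else true.

Definition pend (j : V) (p : seq Ar) : V := last j (map t p).

Definition acyclic : Prop :=
  forall (v : V) (p : seq Ar), p != [::] -> is_path v p -> pend v p != v.

Fixpoint allseqs (n : nat) : seq (seq Ar) :=
  if n is n'.+1 then [::] :: [seq a :: p | a <- enum Ar, p <- allseqs n']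
  else [:: [::]].

(* all paths starting at j; for an acyclic quiver every path has length < #|V|,
   so this is the full (finite) list of paths starting at j. *)
Definition paths_from (j : V) : seq (seq Ar) :=
  undup [seq p <- allseqs #|V| | is_path j p].

(* Finite-dimensional modules over k(double Q), given as k^dim with the action of
   the idempotents e_v, the arrows alpha and the arrows alpha^*.
   Convention: vectors are row vectors, an element x of the module is acted on by
   a generator g via x |-> x *m (matrix of g). *)
Record dmod (k : fieldType) := DMod {
  mdim : nat;
  mE : V -> 'M[k]_mdim;
  mA : Ar -> 'M[k]_mdim;
  mAs : Ar -> 'M[k]_mdim
}.

Variable k : fieldType.

Definition is_dmod (M : dmod k) : Prop :=
  [/\ forall v, mE M v *m mE M v = mE M v,
      forall v w, v != w -> mE M v *m mE M w = 0
    & \sum_(v : V) mE M v = 1%:M] /\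
  [/\ forall a, mA M a = mE M (s a) *m mA M a *m mE M (t a),
      forall a, mAs M a = mE M (t a) *m mAs M a *m mE M (s a),
      (* alpha^* alpha = sum_{gamma : t gamma = s alpha} gamma gamma^* *)
      forall a, mA M a *m mAs M a = \sum_(g : Ar | t g == s a) mAs M g *m mA M g
    & (* beta^* alpha = 0 for alpha <> beta with t alpha = t beta *)
      forall a b, a != b -> t a = t b -> mA M a *m mAs M b = 0].

(* The standard module Delta(j) = kQ e_j (indecomposable projective kQ-module with
   top L(j)), viewed as a D-module with all alpha^* acting as 0.
   Basis: the paths starting at j; e_v keeps paths ending at v; alpha sends a path
   p to alpha p (appending alpha to the traversal). *)
Definition Delta (j : V) : dmod k :=
  let ps := paths_from j in
  @DMod k (size ps)
    (fun v => \matrix_(p, q) ((p == q) && (pend j (nth [::] ps p) == v))%:R)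
    (fun a => \matrix_(p, q) (nth [::] ps q == rcons (nth [::] ps p) a)%:R)
    (fun a => 0).

Definition dpow (M : dmod k) (d : nat) : dmod k :=
  @DMod k (\sum_(l < d) mdim M)
    (fun v => @mxdiag k d (fun _ => mdim M) (fun _ => mE M v))
    (fun a => @mxdiag k d (fun _ => mdim M) (fun _ => mA M a))
    (fun a => @mxdiag k d (fun _ => mdim M) (fun _ => mAs M a)).

#[local] Unset Implicit Arguments.
Definition submod (M : dmod k) (U : 'M[k]_(mdim M)) : Prop :=
  [/\ forall v, (U *m mE M v <= U)%MS,
      forall a, (U *m mA M a <= U)%MS
    & forall a, (U *m mAs M a <= U)%MS].

(* For submodules W <= U of M: the subquotient U/W is isomorphic to N, witnessed by
   a linear map G defined on U which is a module homomorphism U -> N, surjective,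
   with kernel (in U) equal to W. *)
Definition subquot_iso (M : dmod k) (U W : 'M[k]_(mdim M)) (N : dmod k) : Prop :=
  exists G : 'M[k]_(mdim M, mdim N),
    [/\ forall v, U *m mE M v *m G = U *m G *m mE N v,
        forall a, U *m mA M a *m G = U *m G *m mA N a,
        forall a, U *m mAs M a *m G = U *m G *m mAs N a,
        row_full (U *m G)
      & (U :&: kermx G == W)%MS].

(* Delta-filtration of the submodule U of M with successive quotients
   Delta(js_0), Delta(js_1), ...:  0 = F_0 <= F_1 <= ... <= F_r = U,
   F_l submodules, F_{l+1}/F_l ~ Delta(js_l). *)
Definition dfilt (M : dmod k) (U : 'M[k]_(mdim M)) (js : seq V) : Prop :=
  exists F : nat -> 'M[k]_(mdim M),
    [/\ F 0%N = 0, (F (size js) == U)%MS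
      & forall (l : nat) (j : V), onth js l = Some j ->
          [/\ submod M (F l.+1), (F l <= F l.+1)%MS
            & subquot_iso M (F l.+1) (F l) (Delta j)]].

Definition Delta_filtered (M : dmod k) (U : 'M[k]_(mdim M)) : Prop :=
  exists js : seq V, dfilt M U js.

End Quiver.

Arguments submod {V Ar k} M U.
Arguments subquot_iso {V Ar k} M U W N.
Arguments dfilt {V Ar} s t {k} M U js.
Arguments Delta_filtered {V Ar} s t {k} M U.

From HB Require Import structures.
From mathcomp Require Import all_boot all_order all_algebra zify.
Set Implicit Arguments. Unset Strict Implicit. Unset Printing Implicit Defensive.
Import Order.TTheory GRing.Theory Num.Theory.

(* Let i be a sink and 0 = F_0 <= ... <= F_r = M a Delta-filtration of M with
   factors Delta(j_0), ..., Delta(j_(r-1)), of which d are Delta(i).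
   Since i is a sink, Delta(i) = L(i) is one-dimensional, concentrated at i
   and killed by all arrows.  Hence every quotient M/Y' ~ Delta(i)^d kills
     Y := sum_(t a = i) Im a + sum_(v != i) e_v M      (ker_top_i),
   a submodule of M; so Y <= Y', and both the existence and the uniqueness of
   Y' follow once dim Y = dim M - d (top_quotient_exists/_unique).
   - dim Y <= dim M - d (rank_Y_le): e_i M :&: Y lies in the images of the
     arrows into i, and counting the e_v-parts factor by factor shows that
     dim e_i Delta(j) >= [j = i] + sum_(t a = i) dim e_(s a) Delta(j).
   - Intersect the filtration with Y.  At a factor Delta(j), j != i, the same
     isomorphism maps F_(l+1) :&: Y onto Delta(j), as Delta(j) is generated
     away from i.  So the defect dim F_l - dim (F_l :&: Y) - #{l' < l | j_l' = i}
     is nonincreasing; it is 0 at l = 0 and >= 0 at l = r by the bound above,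
     hence constantly 0.  This gives dim Y = dim M - d and shows that the
     factors Delta(i) disappear, so the F_l :&: Y form a Delta-filtration of Y. *)

Section Paths.
Variables (V Ar : finType) (s t : Ar -> V).

Lemma is_path_cons j a p : is_path s t j (a :: p) = (s a == j) && is_path s t (t a) p.
Proof. by case: p => [|b p] /=; rewrite ?andbT // (eq_sym (t a)). Qed.

Lemma is_path_rcons j q a :
  is_path s t j (rcons q a) = is_path s t j q && (pend t j q == s a).
Proof.
case: q => [|b q] /=; first by rewrite andbT /pend /= eq_sym.
by rewrite (@rcons_path _ (fun a b => t a == s b)) /pend /= last_map andbA.
Qed.

Lemma pend_rcons j q a : pend t j (rcons q a) = t a.
Proof. by rewrite /pend map_rcons last_rcons. Qed.

Lemma is_path_take j p m : is_path s t j p -> is_path s t j (take m p).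
Proof.
rewrite -{1}(cat_take_drop m p).
by case: (take m p) => [|b q] //=; rewrite cat_path => /andP[-> /andP[]].
Qed.

Lemma visited_is_prefix_end w p v :
  v \in w :: map t p -> exists m, pend t w (take m p) = v.
Proof.
elim: p w => [|b p IH] w /=; first by rewrite inE => /eqP ->; exists 0%N.
rewrite inE => /orP[/eqP ->|]; first by exists 0%N.
by move=> /IH [m Hm]; exists m.+1.
Qed.

Hypothesis HQ : acyclic s t.

Lemma path_vertices_uniq j p : is_path s t j p -> uniq (j :: map t p).
Proof.
elim: p j => [|a p IH] j //; rewrite is_path_cons => /andP[/eqP Hs Hp].
rewrite cons_uniq (IH _ Hp) andbT; apply/negP => /visited_is_prefix_end [m Hm].
have := HQ (p := a :: take m p) (v := j) isT.
by rewrite is_path_cons Hs eqxx is_path_take //= => /(_ isT); rewrite -Hm /pend /= eqxx.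
Qed.

Lemma paths_fromP j p : (p \in paths_from s t j) = is_path s t j p.
Proof.
rewrite /paths_from mem_undup mem_filter andb_idr // => Hp.
have Hsz : (size p <= #|V|)%N.
  move/path_vertices_uniq/card_uniqP: Hp => Hc.
  by have := max_card (mem (j :: map t p)); rewrite Hc /= size_map => /ltnW.
elim: #|V| p Hsz {Hp} => [|n IH] [|a p] //= Hsz; rewrite ?inE ?eqxx //.
by apply/orP; right; apply: (allpairs_f (fun a p => a :: p)); rewrite ?mem_enum ?IH.
Qed.

End Paths.

Lemma paths_from_sink (V Ar : finType) (s t : Ar -> V) i :
  (forall a, s a != i) -> paths_from s t i = [:: [::]].
Proof.
move=> Hs; rewrite /paths_from.
have : (0 < #|V|)%N by apply/card_gt0P; exists i.
case: #|V| => [//|n] _ /=.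
rewrite (@eq_in_filter _ _ pred0) ?filter_pred0 // => p /allpairsP [[a q] [_ _ ->]] /=.
by rewrite (negbTE (Hs a)).
Qed.

Local Open Scope ring_scope.

Lemma nonincreasing_const disp (T : porderType disp) (f : nat -> T) r :
  (forall l, (l < r)%N -> (f l.+1 <= f l)%O) -> (f 0%N <= f r)%O ->
  forall l, (l <= r)%N -> f l = f 0%N.
Proof.
move=> Hstep Hend.
have mono d l : (l + d <= r)%N -> (f (l + d)%N <= f l)%O.
  elim: d => [|d IH] Hd; first by rewrite addn0.
  by rewrite addnS in Hd *; apply: le_trans (Hstep _ Hd) (IH (ltnW Hd)).
move=> l Hl; have H0 := mono l 0%N; have Hr := mono (r - l)%N l; rewrite subnKC // in Hr.
by apply/eqP; rewrite eq_le H0 // (le_trans Hend) // Hr.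
Qed.

Lemma rank_diag01 (k : fieldType) m (b : 'I_m -> bool) :
  \rank (\matrix_(p, q) ((p == q) && b p)%:R : 'M[k]_m) = #|[pred p | b p]|.
Proof.
set D := \matrix_(p, q) _.
have Hrow p : row p D = if b p then delta_mx 0 p else 0.
  apply/rowP => q; rewrite !mxE; case: (b p); rewrite ?mxE ?andbT ?andbF //=.
  by rewrite eq_sym.
have -> : (D :=: \sum_(p | b p) <<delta_mx 0 p : 'rV[k]_m>>)%MS.
  apply/eqmxP/andP; split.
    apply/row_subP => p; rewrite Hrow; case: ifP => Hb; last exact: sub0mx.
    by rewrite (sumsmx_sup p) // genmxE.
  apply/sumsmx_subP => p Hb; rewrite genmxE.
  by have := row_sub p D; rewrite Hrow Hb.
move/mxdirectP: (@mxdirect_delta k _ b m id (in2W (@inj_id _))) => /= ->.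
by rewrite -sum1_card; apply: eq_bigr => p _; rewrite mxrank_gen mxrank_delta.
Qed.

Lemma hom_restrict (k : fieldType) n p (U U' B : 'M[k]_n) (G : 'M[k]_(n, p)) (C : 'M[k]_p) :
  (U' <= U)%MS -> U *m B *m G = U *m G *m C -> U' *m B *m G = U' *m G *m C.
Proof. by move=> HU' HU; rewrite -(mulmxKpV HU') -!mulmxA !(mulmxA U) HU. Qed.

(* Every subspace Y of k^n of codimension m is the kernel of a surjective
   linear map k^n -> k^m: take a column basis of the cokernel of Y. *)
Lemma exists_surj_with_kernel (k : fieldType) r n m (Y : 'M[k]_(r, n)) :
  (\rank Y + m = n)%N -> exists G : 'M[k]_(n, m), row_full G /\ (kermx G == Y)%MS.
Proof.
move=> Hr; set C := cokermx Y.
have kerC : (kermx C == Y)%MS.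
  by apply/andP; split; [rewrite submxE mulmx_ker | apply/sub_kermxP; rewrite mulmx_coker].
have rankC : \rank C = m by rewrite mxrank_coker; lia.
rewrite -rankC; exists (col_base C); split; first exact: col_base_full.
apply/eqmxP; apply: eqmx_trans (eqmxP kerC); apply/eqmxP/andP; split; apply/sub_kermxP.
  by rewrite -[X in _ *m X]mulmx_base mulmxA mulmx_ker mul0mx.
by apply/eqP; rewrite -(mulmx_free_eq0 _ (row_base_free C)) -mulmxA mulmx_base mulmx_ker.
Qed.

Section StandardModules.
Variables (k : fieldType) (V Ar : finType) (s t : Ar -> V).
Hypothesis HQ : acyclic s t.

Local Notation ps j := (paths_from s t j).

Definition paths_ending (j v : V) : {set 'I_(size (ps j))} :=
  [set p : 'I_(size (ps j)) | pend t j (nth [::] (ps j) p) == v].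

Lemma rank_Delta_E j v : \rank (mE (Delta s t k j) v) = #|paths_ending j v|.
Proof. by rewrite /= rank_diag01 cardsE. Qed.

(* Appending to the paths from j ending at s a an arrow a with t a = i is
   injective and misses the trivial path, so
   dim e_i Delta(j) >= [j = i] + sum_(t a = i) dim e_(s a) Delta(j). *)
Lemma rank_Delta_E_arrows_in j i :
  ((j == i) + \sum_(a | t a == i) \rank (mE (Delta s t k j) (s a))
     <= \rank (mE (Delta s t k j) i))%N.
Proof.
rewrite rank_Delta_E (eq_bigr _ (fun a _ => rank_Delta_E j (s a))).
set m := size (ps j); pose nt (p : 'I_m) := nth [::] (ps j) p.
pose S := [set x : Ar * 'I_m | (t x.1 == i) && (x.2 \in paths_ending j (s x.1))].
have -> : (\sum_(a | t a == i) #|paths_ending j (s a)| = #|S|)%N.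
  under eq_bigr => a _ do rewrite -sum1_card.
  by rewrite pair_big_dep -sum1_card; apply: eq_bigl => y; rewrite [RHS]inE.
pose ext x : 'I_m := insubd x.2 (index (rcons (nt x.2) x.1) (ps j)).
have Hext x : x \in S -> nt (ext x) = rcons (nt x.2) x.1.
  rewrite !inE => /andP[_ Hp].
  have Hin : rcons (nt x.2) x.1 \in ps j.
    by rewrite paths_fromP // is_path_rcons Hp andbT -paths_fromP // mem_nth.
  by rewrite /nt val_insubd index_mem Hin nth_index.
have ext_inj : {in S &, injective ext}.
  move=> [a p] [b q] Hx Hy Exy; have := Hext _ Hx.
  rewrite Exy (Hext _ Hy) => /rcons_inj [Hpq ->] /=.
  by move/eqP: Hpq; rewrite nth_uniq ?undup_uniq // => /eqP /val_inj ->.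
have ext_end : ext @: S \subset paths_ending j i.
  apply/subsetP => p /imsetP [x Hx ->]; rewrite inE -/(nt (ext x)) Hext // pend_rcons.
  by move: Hx; rewrite inE => /andP[].
rewrite -(card_in_imset ext_inj).
case: eqP => [Eji|_]; last by rewrite add0n subset_leq_card.
have Hnil : (index [::] (ps j) < m)%N by rewrite index_mem paths_fromP.
pose nil_idx := Ordinal Hnil.
have nt_nil : nt nil_idx = [::] by rewrite /nt nth_index // paths_fromP.
have -> : (true + #|ext @: S| = #|nil_idx |: ext @: S|)%N.
  suff /negPf Hn : nil_idx \notin ext @: S by rewrite cardsU1 Hn.
  by apply/imsetP => -[x Hx Ex]; have := Hext x Hx; rewrite -Ex nt_nil; case: (nt x.2).
apply: subset_leq_card; rewrite subUset ext_end andbT sub1set inE.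
by rewrite -/(nt nil_idx) nt_nil /pend /= Eji.
Qed.

(* For j != i, Delta(j) is generated by its vertex parts e_v Delta(j) with
   v != i together with the images of the arrows: every path from j ending
   at i is nontrivial, hence is the image of its prefix under its last arrow. *)
Lemma Delta_generated j i r (Z : 'M[k]_(r, mdim (Delta s t k j))) : j != i ->
  (forall v, v != i -> (mE (Delta s t k j) v <= Z)%MS) ->
  (forall a, (mA (Delta s t k j) a <= Z)%MS) -> row_full Z.
Proof.
move=> Hji HE HA; rewrite -sub1mx; apply/row_subP => p; rewrite row1.
case Hv: (pend t j (nth [::] (ps j) p) == i); last first.
  apply: submx_trans (HE _ (negbT Hv)).
  have -> : delta_mx 0 p = row p (mE (Delta s t k j) (pend t j (nth [::] (ps j) p))).
    by apply/rowP => q; rewrite !mxE /= eqxx andbT eq_sym.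
  exact: row_sub.
have : nth [::] (ps j) p \in ps j by rewrite mem_nth.
move: Hv; case/lastP E: (nth [::] (ps j) p) => [|q a].
  by rewrite /pend /= => /eqP Ej; rewrite Ej eqxx in Hji.
rewrite pend_rcons paths_fromP // is_path_rcons => /eqP Hta /andP[Hq _].
have Hqi : (index q (ps j) < size (ps j))%N by rewrite index_mem paths_fromP.
apply: submx_trans (HA a).
have -> : delta_mx 0 p = row (Ordinal Hqi) (mA (Delta s t k j) a).
  apply/rowP => r'; rewrite !mxE /= nth_index ?paths_fromP // -E.
  by rewrite nth_uniq ?undup_uniq // eq_sym.
exact: row_sub.
Qed.

End StandardModules.

Section SimpleAtSink.
Variables (k : fieldType) (V Ar : finType) (s t : Ar -> V) (i : V).
Hypothesis Hsink : forall a, s a != i.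

Lemma Delta_sink_dim : mdim (Delta s t k i) = 1%N.
Proof. by rewrite /= paths_from_sink. Qed.

Lemma Delta_sink_nth p : nth [::] (paths_from s t i) p = [::].
Proof. by rewrite paths_from_sink //; case: p => [|[]]. Qed.

Lemma Delta_sink_E v : mE (Delta s t k i) v = (v == i)%:R%:M.
Proof.
apply/matrixP => p q; rewrite !mxE Delta_sink_nth /pend /=.
have -> : p = q.
  apply: ord_inj; move: (ltn_ord p) (ltn_ord q).
  by move: (p : nat) (q : nat); rewrite Delta_sink_dim => [[|?] [|?]].
by rewrite eqxx eq_sym.
Qed.

Lemma Delta_sink_A a : mA (Delta s t k i) a = 0.
Proof.
apply/matrixP => p q; rewrite !mxE !Delta_sink_nth.
by case: eqP => // /(congr1 size); rewrite size_rcons.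
Qed.

Lemma dpow_sink_dim d : mdim (dpow (Delta s t k i) d) = d.
Proof.
rewrite -[mdim _]/(\sum_(l < d) mdim (Delta s t k i))%N Delta_sink_dim.
by rewrite sum1_card card_ord.
Qed.

Lemma dpow_sink_E d v : mE (dpow (Delta s t k i) d) v = (v == i)%:R%:M.
Proof. by rewrite -[mE _ v]/(\mxdiag_(l < d) mE (Delta s t k i) v) Delta_sink_E mxdiagZ. Qed.

Lemma dpow_sink_A d a : mA (dpow (Delta s t k i) d) a = 0.
Proof. by rewrite -[mA _ a]/(\mxdiag_(l < d) mA (Delta s t k i) a) Delta_sink_A mxdiag0. Qed.

Lemma dpow_sink_As d a : mAs (dpow (Delta s t k i) d) a = 0.
Proof. by rewrite /= mxdiag0. Qed.

End SimpleAtSink.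

Section Subquotients.
Variables (k : fieldType) (V Ar : finType) (s t : Ar -> V) (M : dmod V Ar k).
Local Notation n := (mdim M).

Definition subquot_map (U W : 'M[k]_n) (N : dmod V Ar k) (G : 'M[k]_(n, mdim N)) : Prop :=
  [/\ forall v, U *m mE M v *m G = U *m G *m mE N v,
      forall a, U *m mA M a *m G = U *m G *m mA N a,
      forall a, U *m mAs M a *m G = U *m G *m mAs N a,
      row_full (U *m G)
    & (U :&: kermx G == W)%MS].
Arguments subquot_map : clear implicits.

Lemma subquot_map_ker U W N G : subquot_map U W N G ->
  [/\ (W <= U)%MS, (W <= kermx G)%MS & (U :&: kermx G <= W)%MS].
Proof.
case=> _ _ _ _ /andP[HUW HWU]; split => //.
  exact: submx_trans HWU (capmxSl _ _).
exact: submx_trans HWU (capmxSr _ _).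
Qed.

Lemma rank_subquot U W N G : subquot_map U W N G -> \rank U = (\rank W + mdim N)%N.
Proof.
case=> _ _ _ /eqP Hfull /eqmx_rank HW.
by rewrite -(mxrank_mul_ker U G) Hfull HW addnC.
Qed.

Lemma submod0 : submod M 0.
Proof. by split => *; rewrite mul0mx sub0mx. Qed.

Lemma submod_cap U U' : submod M U -> submod M U' -> submod M (U :&: U')%MS.
Proof.
move=> [HE HA HAs] [HE' HA' HAs'].
have stable B : (U *m B <= U)%MS -> (U' *m B <= U')%MS -> ((U :&: U') *m B <= U :&: U')%MS.
  move=> HUB HUB'; rewrite sub_capmx (submx_trans (submxMr _ (capmxSl _ _)) HUB).
  exact: submx_trans (submxMr _ (capmxSr _ _)) HUB'.
by split => x; apply: stable.
Qed.

Hypothesis HM : is_dmod s t M.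

Lemma E_idem v : mE M v *m mE M v = mE M v.
Proof. by case: HM => [[]]. Qed.

Lemma sub_E_id m (X : 'M[k]_(m, n)) v : (X <= mE M v)%MS -> X *m mE M v = X.
Proof. by case/submxP => D ->; rewrite -mulmxA E_idem. Qed.

Lemma rank_E_subquot U W N G v : submod M U -> submod M W -> subquot_map U W N G ->
  \rank (U *m mE M v) = (\rank (W *m mE M v) + \rank (mE N v))%N.
Proof.
move=> [HU _ _] [HW _ _] HG; have [HWU HWK HUK] := subquot_map_ker HG.
case: HG => HE _ _ Hfull _.
rewrite -(mxrank_mul_ker (U *m mE M v) G) HE (eqmxMfull _ Hfull) addnC.
congr (_ + _)%N; apply/eqmx_rank/andP; split; last first.
  by rewrite sub_capmx submxMr //= (submx_trans (HW v)).
have HX : (U *m mE M v :&: kermx G <= mE M v)%MS by rewrite (submx_trans (capmxSl _ _)) ?submxMl.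
rewrite -(sub_E_id HX) submxMr // (submx_trans _ HUK) // capmxS ?(HU v) //.
Qed.

Lemma subquot_map_sub U U' W W' N G : (U' <= U)%MS -> row_full (U' *m G) ->
  (U' :&: kermx G == W')%MS -> subquot_map U W N G -> subquot_map U' W' N G.
Proof.
move=> HU' Hfull Hker [HE HA HAs _ _].
by split => //; move=> x; apply: hom_restrict HU' _.
Qed.

Lemma subquot_iso_eqmx U W W' N : (W == W')%MS -> subquot_iso M U W N -> subquot_iso M U W' N.
Proof.
move=> /eqmxP HW [G [HE HA HAs Hfull /eqmxP Hker]]; exists G; split => //.
by apply/eqmxP; apply: eqmx_trans Hker HW.
Qed.

Lemma dfilt_eqmx U U' js : (U == U')%MS -> dfilt s t M U js -> dfilt s t M U' js.
Proof.
move=> /eqmxP HU [F [F0 /eqmxP Ftop Fsteps]]; exists F; split => //.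
by apply/eqmxP; apply: eqmx_trans Ftop HU.
Qed.

Lemma dfilt_rcons U U' js j : dfilt s t M U js -> submod M U' -> (U <= U')%MS ->
  subquot_iso M U' U (Delta s t k j) -> dfilt s t M U' (rcons js j).
Proof.
move=> [F [F0 Ftop Fsteps]] HU' HUU' Hiso.
exists (fun l => if (l <= size js)%N then F l else U'); split.
- by rewrite leq0n.
- by rewrite size_rcons ltnn; apply/eqmxP.
move=> l j'; rewrite -cats1 onth_cat; case: ltnP => Hl.
  by move=> /Fsteps; rewrite (ltnW Hl).
case/onth1P => /eqP; rewrite subn_eq0 => Hl' <-.
have -> : l = size js by apply/eqP; rewrite eqn_leq Hl Hl'.
rewrite leqnn; split => //.
  by move/andP: Ftop => [HFU _]; apply: submx_trans HUU'.
by apply: subquot_iso_eqmx Hiso; apply/eqmxP/eqmx_sym/eqmxP.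
Qed.

End Subquotients.
Arguments subquot_map {k V Ar} M U W N G.

Section SinkQuotient.
Variables (k : fieldType) (V Ar : finType) (s t : Ar -> V) (i : V) (M : dmod V Ar k).
Hypothesis Hsink : forall a, s a != i.
Hypothesis HM : is_dmod s t M.
Local Notation n := (mdim M).
Local Notation E := (mE M).
Local Notation A := (mA M).
Local Notation As := (mAs M).

Lemma E_orth v w : v != w -> E v *m E w = 0.
Proof. by case: HM => [[_ HE _] _]; apply: HE. Qed.

Lemma E_sum : \sum_v E v = 1%:M.
Proof. by case: HM => [[]]. Qed.

Lemma A_sub_Et a : (A a <= E (t a))%MS.
Proof. by case: HM => [_ [HA _ _ _]]; rewrite HA submxMl. Qed.

Lemma rank_A_le a : (\rank (A a) <= \rank (E (s a)))%N.
Proof. by case: HM => [_ [HA _ _ _]]; rewrite HA -mulmxA mxrankM_maxl. Qed.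

Lemma As_sub_Es a : (As a <= E (s a))%MS.
Proof. by case: HM => [_ [_ HAs _ _]]; rewrite HAs submxMl. Qed.

Definition arrows_into_i : 'M[k]_n := (\sum_(a | t a == i) A a)%MS.

(* Y is spanned by the images of the arrows ending at i and by the parts of M
   at the vertices v != i: it is the kernel of the largest quotient of M that
   is concentrated at i and killed by all arrows. *)
Definition ker_top_i : 'M[k]_n := (arrows_into_i + \sum_(v | v != i) E v)%MS.
Local Notation Y := ker_top_i.

Lemma E_sub_Y v : v != i -> (E v <= Y)%MS.
Proof. by move=> Hv; rewrite (submx_trans _ (addsmxSr _ _)) // (sumsmx_sup v). Qed.

Lemma A_sub_Y a : (A a <= Y)%MS.
Proof.
have [Hta|Hta] := eqVneq (t a) i; last exact: submx_trans (A_sub_Et a) (E_sub_Y Hta).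
by apply: submx_trans (addsmxSl _ _); rewrite /arrows_into_i (sumsmx_sup a) ?Hta.
Qed.

Lemma As_sub_Y a : (As a <= Y)%MS.
Proof. exact: submx_trans (As_sub_Es a) (E_sub_Y (Hsink a)). Qed.

Lemma Y_sub_gen m (Z : 'M_(m, n)) : (forall v, v != i -> (E v <= Z)%MS) ->
  (forall a, (A a <= Z)%MS) -> (Y <= Z)%MS.
Proof. by move=> HE HA; rewrite addsmx_sub; apply/andP; split; apply/sumsmx_subP. Qed.

Lemma Y_Ei_sub : (Y *m E i <= arrows_into_i)%MS.
Proof.
rewrite addsmxMr addsmx_sub !sumsmxMr; apply/andP; split; apply/sumsmx_subP => x Hx.
  by rewrite -(eqP Hx) (sub_E_id HM (A_sub_Et x)) (sumsmx_sup x).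
by rewrite E_orth // sub0mx.
Qed.

Lemma submod_Y : submod M Y.
Proof.
split => [v|a|a]; last 2 first.
- exact: submx_trans (submxMl _ _) (A_sub_Y a).
- exact: submx_trans (submxMl _ _) (As_sub_Y a).
have [->|Hv] := eqVneq v i; last exact: submx_trans (submxMl _ _) (E_sub_Y Hv).
exact: submx_trans Y_Ei_sub (addsmxSl _ _).
Qed.

Lemma rank_cap_Ei_Y :
  (\rank (E i :&: Y) <= \sum_(a | t a == i) \rank (E (s a)))%N.
Proof.
have HEi : (E i :&: Y <= arrows_into_i)%MS.
  rewrite -[X in (X <= _)%MS](sub_E_id HM (capmxSl _ _)).
  exact: submx_trans (submxMr _ (capmxSr _ _)) Y_Ei_sub.
apply: leq_trans (mxrankS HEi) _; apply: leq_trans (mxrank_sum_leqif _).1 _.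
by apply: leq_sum => a _; apply: rank_A_le.
Qed.

(* Any map realizing M/Y' ~ Delta(i)^d kills the e_v M, v != i, and the
   images of the arrows, hence kills Y. *)
Lemma Y_sub_ker_quot d Y' G : subquot_map M 1%:M Y' (dpow (Delta s t k i) d) G ->
  (Y <= kermx G)%MS.
Proof.
case=> HE HA _ _ _; apply: Y_sub_gen => [v Hv|a]; apply/sub_kermxP.
  by have := HE v; rewrite !mul1mx dpow_sink_E // mul_mx_scalar (negPf Hv) scale0r.
by have := HA a; rewrite !mul1mx dpow_sink_A // mulmx0.
Qed.

Lemma top_quotient_unique d Y' : (\rank Y + d = n)%N ->
  subquot_iso M 1%:M Y' (dpow (Delta s t k i) d) -> (Y' == Y)%MS.
Proof.
move=> Hr [G HG]; have HYG := Y_sub_ker_quot HG.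
case: HG => _ _ _; rewrite mul1mx cap1mx => /eqP Hfull HkerY.
have HYY' : (Y <= Y')%MS by apply: submx_trans HYG _; case/andP: HkerY.
have rankY' : \rank Y' = \rank Y.
  by rewrite -(eqmx_rank HkerY) mxrank_ker Hfull dpow_sink_dim //; lia.
by apply/eqmxP/eqmx_sym/eqmxP; rewrite -(mxrank_leqif_eq HYY').2 rankY'.
Qed.

(* ... and M/Y ~ Delta(i)^d is realized by any surjection onto k^d with kernel Y. *)
Lemma top_quotient_exists d : (\rank Y + d = n)%N ->
  subquot_iso M 1%:M Y (dpow (Delta s t k i) d).
Proof.
move=> Hr; have [G [Hfull /andP[HkerY HYker]]] :
    exists G : 'M[k]_(n, mdim (dpow (Delta s t k i) d)), row_full G /\ (kermx G == Y)%MS.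
  by apply: exists_surj_with_kernel; rewrite dpow_sink_dim.
have killE v : v != i -> E v *m G = 0.
  by move=> Hv; apply/sub_kermxP; apply: submx_trans (E_sub_Y Hv) HYker.
exists G; split; rewrite ?mul1mx ?cap1mx //; last by apply/andP.
- move=> v; rewrite !mul1mx dpow_sink_E // mul_mx_scalar.
  have [->|Hv] := eqVneq v i; last by rewrite killE // scale0r.
  have Hrest : \sum_(w | w != i) E w *m G = 0 by apply: big1 => w; apply: killE.
  by rewrite scale1r -{2}[G]mul1mx -E_sum mulmx_suml (bigD1 i) //= Hrest addr0.
- by move=> a; rewrite !mul1mx dpow_sink_A // mulmx0; apply/sub_kermxP/(submx_trans (A_sub_Y a)).
- by move=> a; rewrite !mul1mx dpow_sink_As // mulmx0; apply/sub_kermxP/(submx_trans (As_sub_Y a)).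
Qed.

Hypothesis HQ : acyclic s t.

(* A step U/W ~ Delta(j) with j != i survives intersection with Y: since
   Delta(j) is generated by its parts away from i and the images of arrows,
   all of which lift into Y, (U :&: Y)/(W :&: Y) ~ Delta(j) via the same map. *)
Lemma subquot_cap_Y U W j G : j != i -> submod M U ->
  subquot_map M U W (Delta s t k j) G ->
  subquot_map M (U :&: Y)%MS (W :&: Y)%MS (Delta s t k j) G.
Proof.
move=> Hj [HUE HUA _] HG; have [HWU HWK HUK] := subquot_map_ker HG.
have HGsub := HG; case: HGsub => HE HA _ Hfull _.
have lift B C : U *m B *m G = U *m G *m C -> (U *m B <= U)%MS -> (B <= Y)%MS ->
    (C <= (U :&: Y) *m G)%MS.
  move=> HBC HBU HBY; rewrite -(eqmxMfull C Hfull) -HBC submxMr // sub_capmx HBU.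
  exact: submx_trans (submxMl _ _) HBY.
apply: subquot_map_sub (capmxSl _ _) _ _ HG.
  apply: (Delta_generated (k := k) HQ Hj) => [v Hv|a].
    exact: lift (HE v) (HUE v) (E_sub_Y Hv).
  exact: lift (HA a) (HUA a) (A_sub_Y a).
apply/andP; split; rewrite sub_capmx; apply/andP; split.
- by apply: submx_trans HUK; apply: capmxS (capmxSl _ _) _.
- exact: submx_trans (capmxSl _ _) (capmxSr _ _).
- exact: capmxS HWU _.
- exact: submx_trans (capmxSl _ _) HWK.
Qed.

Section Filtration.
Variables (js : seq V) (F : nat -> 'M[k]_n).
Hypothesis F0 : F 0%N = 0.
Hypothesis Ftop : (F (size js) == 1%:M)%MS.
Hypothesis Fsteps : forall (l : nat) (j : V), onth js l = Some j ->
  [/\ submod M (F l.+1), (F l <= F l.+1)%MS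
    & subquot_iso M (F l.+1) (F l) (Delta s t k j)].

Local Notation r := (size js).
Local Notation jl l := (nth i js l).

Lemma F_step l : (l < r)%N ->
  [/\ submod M (F l.+1), (F l <= F l.+1)%MS
    & exists G, subquot_map M (F l.+1) (F l) (Delta s t k (jl l)) G].
Proof. by move=> Hl; apply: Fsteps; rewrite onthE (nth_map i). Qed.

Lemma F_submod l : (l <= r)%N -> submod M (F l).
Proof. by case: l => [|l] Hl; [rewrite F0; apply: submod0 | case: (F_step Hl)]. Qed.

Lemma rank_FE l v : (l <= r)%N ->
  \rank (F l *m E v) = (\sum_(x <- take l js) \rank (mE (Delta s t k x) v))%N.
Proof.
elim: l => [|l IH] Hl; first by rewrite F0 mul0mx mxrank0 take0 big_nil.
have [HF1 _ [G HG]] := F_step Hl.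
rewrite (rank_E_subquot HM v HF1 (F_submod (ltnW Hl)) HG) IH 1?ltnW //.
by rewrite (take_nth i Hl) -cats1 big_cat big_seq1.
Qed.

Lemma rank_E_filt v : \rank (E v) = (\sum_(x <- js) \rank (mE (Delta s t k x) v))%N.
Proof. by rewrite -(take_size js) -rank_FE // (eqmxMr _ (eqmxP Ftop)) mul1mx. Qed.

(* dim Y <= dim M - d: dim e_i M + dim Y <= dim M + dim (e_i M :&: Y), where
   dim (e_i M :&: Y) <= sum_(t a = i) dim e_(s a) M, and summing
   rank_Delta_E_arrows_in over the factors bounds d + that sum by dim e_i M. *)
Lemma rank_Y_le : (count_mem i js + \rank Y <= n)%N.
Proof.
have Hcap := rank_cap_Ei_Y; have Hsum := mxrank_sum_cap (E i) Y.
have HEi : (count_mem i js + \sum_(a | t a == i) \rank (E (s a)) <= \rank (E i))%N.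
  rewrite (eq_bigr _ (fun a _ => rank_E_filt (s a))) exchange_big /= rank_E_filt.
  rewrite -sum1_count big_mkcond -big_split /=; apply: leq_sum => x _.
  by rewrite -[X in (X + _)%N]/(nat_of_bool (x == i)) rank_Delta_E_arrows_in.
have := rank_leq_col (E i + Y)%MS; lia.
Qed.

(* A step
   Delta(j), j != i, raises both dimensions by dim Delta(j); a step Delta(i)
   raises dim F_l and the count by 1, and dim (F_l :&: Y) by some m >= 0,
   lowering the defect by m. *)
Definition defect l : int :=
  (\rank (F l))%:Z - (\rank (F l :&: Y))%:Z - (count_mem i (take l js))%:Z.

Lemma count_take_step l : (l < r)%N ->
  count_mem i (take l.+1 js) = (count_mem i (take l js) + (jl l == i))%N.
Proof. by move=> Hl; rewrite (take_nth i Hl) -cats1 count_cat /= addn0. Qed.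

Lemma defect_nonsink l : (l < r)%N -> jl l != i -> defect l.+1 = defect l.
Proof.
move=> Hl Hj; have [HF1 _ [G HG]] := F_step Hl.
have HF := rank_subquot HG; have HFY := rank_subquot (subquot_cap_Y Hj HF1 HG).
by rewrite /defect HF HFY count_take_step // (negPf Hj); lia.
Qed.

Lemma defect_sink l : (l < r)%N -> jl l = i ->
  defect l.+1 + (\rank (F l.+1 :&: Y))%:Z = defect l + (\rank (F l :&: Y))%:Z.
Proof.
move=> Hl Hj; have [_ _ [G HG]] := F_step Hl.
have HF := rank_subquot HG; rewrite Hj Delta_sink_dim // in HF.
by rewrite /defect HF count_take_step // Hj eqxx; lia.
Qed.

Lemma defect_nonincreasing l : (l < r)%N -> defect l.+1 <= defect l.
Proof.
move=> Hl; have [Hj|Hj] := eqVneq (jl l) i; last by rewrite defect_nonsink.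
have [_ HFl _] := F_step Hl; have HFY := mxrankS (capmxS HFl (submx_refl Y)).
have := defect_sink Hl Hj; lia.
Qed.

Lemma rank_Ftop_cap_Y : \rank (F r :&: Y) = \rank Y.
Proof. by rewrite (cap_eqmx (eqmxP Ftop) (eqmx_refl Y)) cap1mx. Qed.

(* The defect vanishes at 0 and is >= 0 at r by rank_Y_le, so it is 0. *)
Lemma defect_zero l : (l <= r)%N -> defect l = 0.
Proof.
move=> Hl; have HYle := rank_Y_le.
have -> : 0 = defect 0 by rewrite /defect F0 cap0mx mxrank0 take0.
apply: (nonincreasing_const defect_nonincreasing _ Hl).
rewrite /defect F0 cap0mx mxrank0 take0 take_size rank_Ftop_cap_Y (eqmxP Ftop) mxrank1.
lia.
Qed.

Lemma rank_Y_eq : (\rank Y + count_mem i js)%N = n.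
Proof.
have := defect_zero (leqnn r).
by rewrite /defect take_size rank_Ftop_cap_Y (eqmxP Ftop) mxrank1; lia.
Qed.

Lemma cap_Y_sink_step l : (l < r)%N -> jl l = i -> (F l.+1 :&: Y == F l :&: Y)%MS.
Proof.
move=> Hl Hj; have [_ HFl _] := F_step Hl.
have Hrk := defect_sink Hl Hj; rewrite !defect_zero // 1?ltnW // !add0r in Hrk.
have Hsub := capmxS HFl (submx_refl Y).
by apply/eqmxP/eqmx_sym/eqmxP; rewrite -(mxrank_leqif_eq Hsub).2; apply/eqP; lia.
Qed.

Lemma Y_filtered_prefix l : (l <= r)%N ->
  dfilt s t M (F l :&: Y)%MS [seq x <- take l js | x != i].
Proof.
elim: l => [|l IH] Hl.
  apply: dfilt_eqmx (_ : (0 == _)%MS) _; first by rewrite F0 cap0mx; apply/eqmxP.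
  by exists (fun _ => 0); split=> // [|l j]; [apply/eqmxP | rewrite take0 onth0n].
have [HF1 HFl [G HG]] := F_step Hl.
rewrite (take_nth i Hl) filter_rcons; have [Hj|Hj] := eqVneq (jl l) i.
  by apply: dfilt_eqmx (IH (ltnW Hl)); apply/eqmxP/eqmx_sym/eqmxP; apply: cap_Y_sink_step.
apply: dfilt_rcons (IH (ltnW Hl)) (submod_cap HF1 submod_Y) (capmxS HFl (submx_refl Y)) _.
by exists G; apply: subquot_cap_Y Hj HF1 HG.
Qed.

Lemma Y_filtered : Delta_filtered s t M Y.
Proof.
have := Y_filtered_prefix (leqnn r); rewrite take_size => HYF.
exists [seq x <- js | x != i]; apply: dfilt_eqmx HYF; apply/eqmxP.
by apply: eqmx_trans (cap_eqmx (eqmxP Ftop) (eqmx_refl Y)) _; rewrite cap1mx.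
Qed.
End Filtration.

End SinkQuotient.

Theorem mainTheorem11 (k : closedFieldType) (V Ar : finType) (s t : Ar -> V)
  (HQ : acyclic s t) (i : V) (Hsink : forall a : Ar, s a != i)
  (M : dmod V Ar k) (HM : is_dmod s t M)
  (js : seq V) (Hfilt : dfilt s t M 1%:M js)
  (d : nat) (Hd : count_mem i js = d) (Hdpos : (0 < d)%N) :
  exists Y : 'M[k]_(mdim M),
    [/\ submod M Y,
        subquot_iso M 1%:M Y (dpow (Delta s t k i) d),
        (forall Y' : 'M[k]_(mdim M), submod M Y' ->
            subquot_iso M 1%:M Y' (dpow (Delta s t k i) d) -> (Y' == Y)%MS)
      & Delta_filtered s t M Y].
Proof.
case: Hfilt => F [F0 Ftop Fsteps].
have Hrank := rank_Y_eq Hsink HM HQ F0 Ftop Fsteps; rewrite Hd in Hrank.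
exists (ker_top_i t i M); split.
- exact: submod_Y.
- exact: top_quotient_exists.
- by move=> Y' _; apply: top_quotient_unique.
- exact: Y_filtered F0 Ftop Fsteps.
Qed.
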